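(* Let $F$ be a non-archimedean local field of characteristic not $2$ with valuation ring $\mathfrak{o}$, $V$ a $2$-dimensional $F$-vector space, and $\ddagger$ an orthogonal involution on $End(V)$ with associated bilinear form $b_\ddagger$ and quadratic form $q_\ddagger$. (1) Let $\phi$ be an automorphism of the algebra with involution $(End(V),\ddagger)$, and let $\Lambda$ be an $\mathfrak{a}$-maximal lattice for some fractional ideal $\mathfrak{a}$. Then there exist $\lambda\in F^\times$ and a $\lambda\mathfrak{a}$-maximal lattice $\Lambda'$ such that $$\phi\bigl(End(\Lambda)\cap End(\Lambda^\sharp)\bigr)=End(\Lambda')\cap End(\Lambda'^\sharp).$$ (2) Conversely, if $\Lambda,\Lambda'$ are both $\mathfrak{a}$-maximal lattices, then there is an automorphism $\phi$ of $(End(V),\ddagger)$ with $\phi\bigl(End(\Lambda)\cap End(\Lambda^\sharp)\bigr)=End(\Lambda')\cap End(\Lambda'^\sharp)$.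
   Context: $b_\ddagger$ is a nondegenerate symmetric bilinear form on $V$ with $b_\ddagger(v,\sigma w)=b_\ddagger(\sigma^\ddagger v,w)$ (fixed up to scaling), $q_\ddagger(v)=b_\ddagger(v,v)$. An automorphism of $(End(V),\ddagger)$ is an $F$-algebra automorphism commuting with $\ddagger$. A lattice is a finitely generated $\mathfrak{o}$-submodule spanning $V$; $\Lambda^\sharp=\{v: b_\ddagger(v,\Lambda)\subset\mathfrak{o}\}$; $End(\Lambda)=\{\sigma:\sigma\Lambda\subset\Lambda\}$. The norm $\mathfrak{n}\Lambda$ is the fractional ideal generated by $q_\ddagger(\Lambda)$. For a fractional ideal $\mathfrak{a}$, $\Lambda$ is $\mathfrak{a}$-maximal if $\mathfrak{n}\Lambda\subset\mathfrak{a}$ and every lattice $\Lambda'\supset\Lambda$ with $\mathfrak{n}\Lambda'\subset\mathfrak{a}$ equals $\Lambda$. *)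

From HB Require Import structures.
From mathcomp Require Import all_boot all_order all_algebra.
Set Implicit Arguments. Unset Strict Implicit. Unset Printing Implicit Defensive.
Import Order.TTheory GRing.Theory Num.Theory.
Local Open Scope ring_scope.

Section LocalField.
Variables (F : fieldType) (v : F -> int).

(* v is a normalized discrete valuation (only its values on nonzero elements matter). *)
Record discrete_valuation : Prop := {
  dv_mul : forall x y, x != 0 -> y != 0 -> v (x * y) = v x + v y;
  dv_add : forall x y, x != 0 -> y != 0 -> x + y != 0 ->
             Order.min (v x) (v y) <= v (x + y);
  dv_surj : forall n : int, exists x, x != 0 /\ v x = n }.

Definition vring (x : F) : Prop := x = 0 \/ 0 <= v x.

Definition vsmall (k : int) (x : F) : Prop := x = 0 \/ k <= v x.

Definition vcauchy (u : nat -> F) : Prop :=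
  forall k : int, exists N : nat, forall m n, (N <= m)%N -> (N <= n)%N ->
    vsmall k (u m - u n).

Definition vconverges (u : nat -> F) (l : F) : Prop :=
  forall k : int, exists N : nat, forall n, (N <= n)%N -> vsmall k (u n - l).

Definition vcomplete : Prop :=
  forall u, vcauchy u -> exists l, vconverges u l.

Definition finite_residue_field : Prop :=
  exists s : seq F, (forall y, y \in s -> vring y) /\
    forall x, vring x -> exists2 y, y \in s & vsmall 1 (x - y).

Definition nonarch_local_field : Prop :=
  [/\ discrete_valuation, vcomplete & finite_residue_field].

Definition fractional_ideal (I : F -> Prop) : Prop :=
  (exists n (g : 'I_n -> F), forall x,
      I x <-> exists c : 'I_n -> F, (forall i, vring (c i)) /\ x = \sum_i c i * g i)
  /\ exists x, I x /\ x != 0.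

Definition scale_ideal (l : F) (I : F -> Prop) : F -> Prop :=
  fun x => exists2 a, I a & x = l * a.

(* V = F^2 (column vectors), End(V) = 2x2 matrices acting on the left. *)
Variable B : 'M[F]_2. (* Gram matrix of b_dagger *)

Definition bform (x y : 'cV[F]_2) : F := (x^T *m B *m y) 0 0.
Definition qform (x : 'cV[F]_2) : F := bform x x.

Definition is_lattice (L : 'cV[F]_2 -> Prop) : Prop :=
  exists n (g : 'I_n -> 'cV[F]_2),
    (forall x, L x <-> exists c : 'I_n -> F,
        (forall i, vring (c i)) /\ x = \sum_i c i *: g i)
    /\ (forall w : 'cV[F]_2, exists c : 'I_n -> F, w = \sum_i c i *: g i).

Definition dual_lattice (L : 'cV[F]_2 -> Prop) : 'cV[F]_2 -> Prop :=
  fun x => forall y, L y -> vring (bform x y).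

Definition End_lattice (L : 'cV[F]_2 -> Prop) : 'M[F]_2 -> Prop :=
  fun s => forall x, L x -> L (s *m x).

Definition norm_lattice (L : 'cV[F]_2 -> Prop) : F -> Prop :=
  fun a => exists n (y : 'I_n -> 'cV[F]_2) (c : 'I_n -> F),
    (forall i, L (y i) /\ vring (c i)) /\ a = \sum_i c i * qform (y i).

Definition maximal_lattice (I : F -> Prop) (L : 'cV[F]_2 -> Prop) : Prop :=
  [/\ is_lattice L,
      (forall a, norm_lattice L a -> I a) &
      forall L', is_lattice L' -> (forall x, L x -> L' x) ->
        (forall a, norm_lattice L' a -> I a) ->
        forall x, L' x -> L x].

Definition inv_automorphism (dag : 'M[F]_2 -> 'M[F]_2) (phi : 'M[F]_2 -> 'M[F]_2) : Prop :=
  bijective phi /\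
  (forall s t, phi (s + t) = phi s + phi t) /\
  (forall s t, phi (s * t) = phi s * phi t) /\
  phi 1 = 1 /\
  (forall (c : F) s, phi (c *: s) = c *: phi s) /\
  (forall s, phi (dag s) = dag (phi s)).

Definition order_of (L : 'cV[F]_2 -> Prop) : 'M[F]_2 -> Prop :=
  fun s => End_lattice L s /\ End_lattice (dual_lattice L) s.

End LocalField.

From HB Require Import structures.
From mathcomp Require Import all_boot all_order all_algebra.
From mathcomp Require Import zify ring.
From Stdlib Require Import Classical.
Set Implicit Arguments. Unset Strict Implicit. Unset Printing Implicit Defensive.
Import Order.TTheory GRing.Theory Num.Theory.
Local Open Scope ring_scope.

(* By Skolem-Noether every automorphism of (End V, dag) is conjugation by some
   g in GL(V); since it commutes with dag, the matrix K with b(gx, gy) = b(x, Ky)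
   is central, so g is a similitude of multiplier mu. Conjugation by g carries
   End(L) /\ End(L^#) to the same order for gL, because (gL)^# = mu^-1 g L^#,
   and gL is (mu a)-maximal: this is (1).
   For (2) we find an isometry g with gL = L'. Write a = p^m. If q is isotropic,
   V has a hyperbolic basis (e, f) and the a-maximal lattices are exactly
   {x | b(f, x) in p^i, 2 b(e, x) in p^(m-i)}; the isometry e -> p e,
   f -> p^-1 f shifts i by v(p). If q is anisotropic, Hensel's lemma shows that
   q(x), q(y) in a imply q(x + y) in a, so L + L' has norm in a and maximality
   forces L = L'. *)

Section Valuation.
Variables (F : fieldType) (v : F -> int).
Hypothesis hv : discrete_valuation v.

Lemma dv1 : v 1 = 0.
Proof.
have := dv_mul hv (oner_neq0 F) (oner_neq0 F); rewrite mulr1.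
move: (v 1) => a; lia.
Qed.

Lemma dvV x : x != 0 -> v x^-1 = - v x.
Proof.
move=> x0; have := dv_mul hv x0 (invr_neq0 x0); rewrite mulfV // dv1.
move: (v x) (v x^-1) => a b; lia.
Qed.

Lemma dvN x : x != 0 -> v (- x) = v x.
Proof.
have N1 : (-1 : F) != 0 by rewrite oppr_eq0 oner_eq0.
have vN1 : v (-1) = 0.
  have := dv_mul hv N1 N1; rewrite mulrNN mulr1 dv1; move: (v (-1)) => a; lia.
by move=> x0; rewrite -mulN1r (dv_mul hv N1 x0) vN1 add0r.
Qed.

Lemma vsmall_val x : vsmall v (v x) x.
Proof. by right. Qed.

Lemma vsmallW k l x : k <= l -> vsmall v l x -> vsmall v k x.
Proof. by move=> kl [->|h]; [left | right; apply: le_trans h]. Qed.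

Lemma vsmallD k x y : vsmall v k x -> vsmall v k y -> vsmall v k (x + y).
Proof.
case=> [->|hx]; first by rewrite add0r.
case=> [->|hy]; first by rewrite addr0; right.
have [->|x0] := eqVneq x 0; first by rewrite add0r; right.
have [->|y0] := eqVneq y 0; first by rewrite addr0; right.
have [s0|s0] := eqVneq (x + y) 0; first by left.
by right; apply: le_trans (dv_add hv x0 y0 s0); rewrite le_min hx hy.
Qed.

Lemma vsmallN k x : vsmall v k x -> vsmall v k (- x).
Proof.
case=> [->|hx]; first by rewrite oppr0; left.
have [->|x0] := eqVneq x 0; first by rewrite oppr0; left.
by right; rewrite dvN.
Qed.

Lemma vsmallB k x y : vsmall v k x -> vsmall v k y -> vsmall v k (x - y).
Proof. by move=> hx /vsmallN; apply: vsmallD. Qed.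

Lemma vsmallM k l x y : vsmall v k x -> vsmall v l y -> vsmall v (k + l) (x * y).
Proof.
case=> [->|hx]; first by rewrite mul0r; left.
case=> [->|hy]; first by rewrite mulr0; left.
have [->|x0] := eqVneq x 0; first by rewrite mul0r; left.
have [->|y0] := eqVneq y 0; first by rewrite mulr0; left.
by right; rewrite (dv_mul hv x0 y0) lerD.
Qed.

Lemma vsmallV x : x != 0 -> vsmall v (- v x) x^-1.
Proof. by move=> x0; right; rewrite dvV. Qed.

Lemma vsmall_mull k c x : c != 0 -> vsmall v k (c * x) <-> vsmall v (k - v c) x.
Proof.
move=> c0; split => [|h]; last by have := vsmallM (vsmall_val c) h; rewrite addrC subrK.
by move=> /(vsmallM (vsmallV c0)); rewrite mulKf // addrC.
Qed.

Lemma vsmall_sum k n (w : 'I_n -> F) :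
  (forall i, vsmall v k (w i)) -> vsmall v k (\sum_i w i).
Proof. by move=> h; apply: (big_ind (vsmall v k)) => //; [left | apply: vsmallD]. Qed.

Lemma vsmall_eq0 x : (forall k, vsmall v k x) -> x = 0.
Proof. by move=> /(_ (v x + 1)) [// | ]; move: (v x) => a; lia. Qed.

Lemma vsmall_dec k x : vsmall v k x \/ ~ vsmall v k x.
Proof.
have [->|x0] := eqVneq x 0; first by left; left.
have [h|h] := lerP k (v x); first by left; right.
by right; case=> [/eqP|]; [rewrite (negPf x0) | rewrite leNgt h].
Qed.

Lemma not_vsmall k x : ~ vsmall v k x -> x != 0 /\ v x < k.
Proof.
move=> h; split; first by apply: contra_notN h => /eqP ->; left.
by rewrite ltNge; apply/negP => hk; apply: h; right.
Qed.

Lemma exists_min_val n (w : 'I_n -> F) k1 : w k1 != 0 ->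
  exists k0, w k0 != 0 /\ forall k, vsmall v (v (w k0)) (w k).
Proof.
move=> wk1; have [k0 wk0 hmin] := arg_minP (fun k => v (w k)) (wk1 : (fun k => w k != 0) k1).
exists k0; split => // k; have [->|wk] := eqVneq (w k) 0; first by left.
by right; apply: hmin.
Qed.

Lemma fractional_idealP I : fractional_ideal v I -> exists m, forall x, I x <-> vsmall v m x.
Proof.
case=> [[n [g hI]] [x0 [/hI [c [_ ->]] sum_neq0]]].
have [k1 gk1 | g0] := pickP (fun k => g k != 0); last first.
  by case/eqP: sum_neq0; apply: big1 => i _; move/negbFE/eqP: (g0 i) ->; rewrite mulr0.
have [k0 [gk0 hmin]] := exists_min_val gk1.
exists (v (g k0)) => x; split.
  case/hI => d [hd ->]; apply: vsmall_sum => i.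
  by have := vsmallM (hd i) (hmin i); rewrite add0r.
move=> hx; apply/hI; exists (fun i => if i == k0 then x / g k0 else 0); split.
  move=> i; case: eqP => _; last by left.
  by have := vsmallM hx (vsmallV gk0); rewrite addrN.
rewrite (bigD1 k0) //= eqxx mulfVK // big1 ?addr0 // => i /negPf ->.
by rewrite mul0r.
Qed.

End Valuation.

Section Complete.
Variables (F : fieldType) (v : F -> int).
Hypotheses (hv : discrete_valuation v) (hcomp : vcomplete v).

Lemma contraction_fixpoint (f : F -> F) :
  (forall t, vsmall v 0 t -> vsmall v 0 (f t)) ->
  (forall k t t', vsmall v 0 t -> vsmall v 0 t' -> vsmall v k (t - t') ->
     vsmall v (k + 1) (f t - f t')) ->
  exists2 l, vsmall v 0 l & f l = l.
Proof.
move=> f_int f_contr; pose t n := iter n f 0.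
have t_int n : vsmall v 0 (t n) by elim: n => [|n IH]; [left | apply: f_int].
have t_step (n : nat) : vsmall v n (t n.+1 - t n).
  elim: n => [|n IH]; first by rewrite subr0; apply: f_int; left.
  by rewrite intS addrC; apply: f_contr (t_int _) (t_int _) IH.
have t_tail (N d : nat) : vsmall v N (t (N + d)%N - t N).
  elim: d => [|d IH]; first by rewrite addn0 subrr; left.
  rewrite addnS -(subrK (t (N + d)%N) (t _)) -addrA; apply: (vsmallD hv) => //.
  by apply: (vsmallW _ (t_step _)); rewrite PoszD lerDl.
have t_cauchy : vcauchy v t.
  move=> k; exists (absz k) => i j /subnKC <- /subnKC <-.
  set K := absz k; rewrite -(subrKA (t K)) -[t K - _]opprB.
  by apply: (vsmallB hv); apply: (vsmallW (lez_abs k)); apply: t_tail.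
have [l t_lim] := hcomp t_cauchy.
have [N hN] := t_lim 0.
exists l; first by rewrite -(subKr (t N) l); apply: (vsmallB hv); last exact: hN.
apply/eqP; rewrite -subr_eq0; apply/eqP; apply: (vsmall_eq0 (v := v)) => k.
have [M hM] := t_lim k.
rewrite -(subrKA (f (t M))); apply: (vsmallD hv); last exact: (hM M.+1).
apply: (vsmallW _ (f_contr k _ _ _ (t_int M) _)); first by rewrite lerDl.
  by rewrite -(subKr (t N) l); apply: (vsmallB hv); last exact: hN.
by rewrite -opprB; apply: (vsmallN hv); apply: hM.
Qed.

Lemma hensel_quadratic (a c : F) : vsmall v 1 a -> vsmall v 1 (c - 1) ->
  exists2 l, vsmall v 0 l & c * l = 1 + a * l * l.
Proof.
move=> ha hc.
have one_int : vsmall v 0 1 by right; rewrite (dv1 hv).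
have [c0 vc] : c != 0 /\ v c < 1.
  apply: not_vsmall => /(vsmallB hv)/(_ hc); rewrite subKr.
  by case=> [/eqP|]; rewrite ?oner_eq0 ?(dv1 hv).
have ci_int : vsmall v 0 c^-1.
  by apply: (vsmallW _ (vsmallV hv c0)); move: vc; move: (v c) => w; lia.
pose f t := (1 + a * t * t) / c.
have [l l_int fl] : exists2 l, vsmall v 0 l & f l = l.
  apply: contraction_fixpoint => [t t_int | k t t' t_int t'_int htt'].
    have att : vsmall v 0 (a * t * t).
      exact: (vsmallW _ (vsmallM hv (vsmallM hv ha t_int) t_int)).
    exact: (vsmallM hv (vsmallD hv one_int att) ci_int).
  have -> : f t - f t' = a * (t - t') * (t + t') / c by rewrite /f; field.
  have := vsmallM hv (vsmallM hv (vsmallM hv ha htt') (vsmallD hv t_int t'_int)) ci_int.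
  by rewrite !addr0 addrC.
by exists l; rewrite // -[in c * l]fl /f mulrCA mulfV ?mulr1.
Qed.

End Complete.

Lemma mx_cV_ext (F : fieldType) m n (M N : 'M[F]_(m, n)) :
  (forall x : 'cV[F]_n, M *m x = N *m x) -> M = N.
Proof.
move=> h; apply/matrixP => i j.
by have /matrixP/(_ i 0) := h (delta_mx j 0); rewrite -!colE !mxE.
Qed.

Section BilinearForm.
Variables (F : fieldType) (B : 'M[F]_2).
Local Notation b := (bform B).
Local Notation q := (qform B).

Lemma bformDl x y z : b (x + y) z = b x z + b y z.
Proof. by rewrite /bform linearD /= !mulmxDl mxE. Qed.

Lemma bformDr x y z : b z (x + y) = b z x + b z y.
Proof. by rewrite /bform !mulmxDr mxE. Qed.

Lemma bformZl (c : F) x z : b (c *: x) z = c * b x z.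
Proof. by rewrite /bform linearZ /= -!scalemxAl mxE. Qed.

Lemma bformZr (c : F) x z : b z (c *: x) = c * b z x.
Proof. by rewrite /bform -!scalemxAr mxE. Qed.

Lemma bformNl x z : b (- x) z = - b x z.
Proof. by rewrite -scaleN1r bformZl mulN1r. Qed.

Lemma bformNr x z : b z (- x) = - b z x.
Proof. by rewrite -scaleN1r bformZr mulN1r. Qed.

Lemma bformBl x y z : b (x - y) z = b x z - b y z.
Proof. by rewrite bformDl bformNl. Qed.

Lemma bformBr x y z : b z (x - y) = b z x - b z y.
Proof. by rewrite bformDr bformNr. Qed.

Lemma bform0r z : b z 0 = 0.
Proof. by rewrite -(scale0r 0) bformZr mul0r. Qed.

Lemma bform_sumr n (c : 'I_n -> F) g x :
  b x (\sum_i c i *: g i) = \sum_i c i * b x (g i).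
Proof.
elim/big_rec2: _ => [|i y1 y2 _ <-]; first exact: bform0r.
by rewrite bformDr bformZr.
Qed.

Lemma qformZ (c : F) x : q (c *: x) = c ^+ 2 * q x.
Proof. by rewrite /qform bformZl bformZr mulrA. Qed.

Hypothesis B_sym : B^T = B.

Lemma bformC x y : b x y = b y x.
Proof.
have -> : b x y = (x^T *m B *m y)^T 0 0 by rewrite mxE.
by rewrite !trmx_mul trmxK B_sym mulmxA.
Qed.

Lemma qformD x y : q (x + y) = q x + q y + 2 * b x y.
Proof. by rewrite /qform !bformDl !bformDr (bformC y x); ring. Qed.

Hypothesis B_unit : B \in unitmx.

Lemma bform_nondeg w : (forall y, b w y = 0) -> w = 0.
Proof.
move=> h; apply: trmx_inj; rewrite trmx0 -[w^T](mulmxK B_unit).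
have -> : w^T *m B = 0.
  by apply/matrixP => i j; rewrite (ord1 i) [RHS]mxE -(h (delta_mx j 0)) /bform -colE [RHS]mxE.
by rewrite mul0mx.
Qed.

Lemma bform_mulmx_inj (M N : 'M[F]_2) :
  (forall x y, b (M *m x) y = b (N *m x) y) -> M = N.
Proof.
move=> h; apply: mx_cV_ext => x; apply/eqP; rewrite -subr_eq0; apply/eqP.
by apply: bform_nondeg => y; rewrite bformBl h subrr.
Qed.

End BilinearForm.

Section Lattice.
Variables (F : fieldType) (v : F -> int) (B : 'M[F]_2).
Hypothesis hv : discrete_valuation v.
Local Notation b := (bform B).
Local Notation q := (qform B).

Lemma lattice0 L : is_lattice v L -> L 0.
Proof.
case=> n [g [hL _]]; apply/hL; exists (fun _ => 0); split; first by left.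
by rewrite big1 // => i _; rewrite scale0r.
Qed.

Lemma latticeD L x y : is_lattice v L -> L x -> L y -> L (x + y).
Proof.
case=> n [g [hL _]] /hL [c [hc ->]] /hL [c' [hc' ->]].
apply/hL; exists (fun i => c i + c' i); split.
  by move=> i; exact: (vsmallD hv (hc i) (hc' i)).
by rewrite -big_split; apply: eq_bigr => i _; rewrite scalerDl.
Qed.

Definition lattice_sum (L L' : 'cV[F]_2 -> Prop) : 'cV[F]_2 -> Prop :=
  fun x => exists y z, [/\ L y, L' z & x = y + z].

Lemma is_lattice_sum L L' :
  is_lattice v L -> is_lattice v L' -> is_lattice v (lattice_sum L L').
Proof.
case=> n [g [hL g_span]] [n' [g' [hL' _]]].
pose h k := match split k with inl i => g i | inr j => g' j end.
have split_lshift i : split (lshift n' i) = inl i := unsplitK (inl i).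
have split_rshift j : split (rshift n j) = inr j := unsplitK (inr j).
have sumE (c : 'I_(n + n') -> F) : \sum_k c k *: h k =
    \sum_i c (lshift n' i) *: g i + \sum_j c (rshift n j) *: g' j.
  rewrite big_split_ord; congr (_ + _); apply: eq_bigr => i _;
    by rewrite /h ?split_lshift ?split_rshift.
exists (n + n')%N, h; split => [x|w].
  split=> [[y [z [/hL [c [hc ->]] /hL' [c' [hc' ->]] ->]]] | [c [hc ->]]].
    exists (fun k => match split k with inl i => c i | inr j => c' j end); split.
      by move=> k; case: (split k).
    rewrite sumE; congr (_ + _); apply: eq_bigr => i _;
      by rewrite ?split_lshift ?split_rshift.
  rewrite sumE; exists (\sum_i c (lshift n' i) *: g i), (\sum_j c (rshift n j) *: g' j).
  split => //; first by apply/hL; exists (fun i => c (lshift n' i)).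
  by apply/hL'; exists (fun j => c (rshift n j)).
have [c ->] := g_span w; exists (fun k => match split k with inl i => c i | inr _ => 0 end).
rewrite sumE [X in _ + X]big1 ?addr0 => [|j _]; last by rewrite split_rshift scale0r.
by apply: eq_bigr => i _; rewrite split_lshift.
Qed.

Lemma norm_lattice_qform L y : L y -> norm_lattice v B L (q y).
Proof.
move=> Ly; exists 1%N, (fun _ => y), (fun _ => 1); rewrite big_ord1 mul1r.
by split=> //; split; last by right; rewrite (dv1 hv).
Qed.

Lemma norm_lattice_vsmall L m a : (forall y, L y -> vsmall v m (q y)) ->
  norm_lattice v B L a -> vsmall v m a.
Proof.
move=> h [n [y [c [hy ->]]]]; apply: (vsmall_sum hv) => i.
by have [/h Ly ci] := hy i; have := vsmallM hv ci Ly; rewrite add0r.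
Qed.

Hypothesis B_sym : B^T = B.

Lemma norm_lattice_bform2 L m x y : is_lattice v L ->
  (forall a, norm_lattice v B L a -> vsmall v m a) -> L x -> L y ->
  vsmall v m (2 * b x y).
Proof.
move=> hl hn Lx Ly; have -> : 2 * b x y = q (x + y) - q x - q y by rewrite qformD //; ring.
have small_q z : L z -> vsmall v m (q z) by move=> Lz; apply/hn/norm_lattice_qform.
by apply: (vsmallB hv); first apply: (vsmallB hv); apply: small_q => //; apply: latticeD.
Qed.

End Lattice.

Definition similitude (F : fieldType) (B g : 'M[F]_2) (mu : F) : Prop :=
  forall x y, bform B (g *m x) (g *m y) = mu * bform B x y.

Definition lattice_image (F : fieldType) (g : 'M[F]_2) (L : 'cV[F]_2 -> Prop) :
  'cV[F]_2 -> Prop := fun y => L (invmx g *m y).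

Section Ext.
Variables (F : fieldType) (v : F -> int) (B : 'M[F]_2) (L L' : 'cV[F]_2 -> Prop).
Hypothesis LL' : forall x, L x <-> L' x.

Lemma End_lattice_ext s : End_lattice L s <-> End_lattice L' s.
Proof. by split=> hs x /LL' /hs /LL'. Qed.

Lemma dual_lattice_ext x : dual_lattice v B L x <-> dual_lattice v B L' x.
Proof. by split=> hx y /LL' /hx. Qed.

End Ext.

Lemma order_of_ext (F : fieldType) (v : F -> int) B (L L' : 'cV[F]_2 -> Prop) s :
  (forall x, L x <-> L' x) -> order_of v B L s <-> order_of v B L' s.
Proof.
move=> LL'; rewrite /order_of (End_lattice_ext LL').
by rewrite (End_lattice_ext (dual_lattice_ext v B LL')).
Qed.

Section Image.
Variables (F : fieldType) (v : F -> int) (B g : 'M[F]_2).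
Hypothesis g_unit : g \in unitmx.

Lemma is_lattice_image L : is_lattice v L -> is_lattice v (lattice_image g L).
Proof.
case=> n [gs [hL g_span]]; exists n, (fun i => g *m gs i); split => [x|w].
  rewrite /lattice_image hL; split=> [[c [hc e]] | [c [hc ->]]]; exists c; split => //.
    by rewrite -(mulKVmx g_unit x) e mulmx_sumr; apply: eq_bigr => i _; rewrite scalemxAr.
  by rewrite mulmx_sumr; apply: eq_bigr => i _; rewrite -scalemxAr mulKmx.
have [c e] := g_span (invmx g *m w); exists c.
by rewrite -(mulKVmx g_unit w) e mulmx_sumr; apply: eq_bigr => i _; rewrite scalemxAr.
Qed.

Lemma End_lattice_image L s :
  End_lattice (lattice_image g L) (g *m s *m invmx g) <-> End_lattice L s.
Proof.
have conjE y : invmx g *m (g *m s *m invmx g *m y) = s *m (invmx g *m y).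
  by rewrite !mulmxA mulVmx // mul1mx -mulmxA.
rewrite /End_lattice /lattice_image; split=> hs x Lx; last by rewrite conjE; apply: hs.
by have := hs (g *m x); rewrite conjE !mulKmx //; apply.
Qed.

Variable mu : F.
Hypotheses (mu0 : mu != 0) (g_sim : similitude B g mu).

Lemma similitudeV : similitude B (invmx g) mu^-1.
Proof.
move=> x y; apply: (mulfI mu0).
by rewrite -g_sim !mulKVmx // mulrA mulfV // mul1r.
Qed.

Lemma norm_lattice_image L a : norm_lattice v B (lattice_image g L) a ->
  exists2 a', norm_lattice v B L a' & a = mu * a'.
Proof.
move=> [n [y [c [hy ->]]]]; exists (\sum_i c i * qform B (invmx g *m y i)).
  by exists n, (fun i => invmx g *m y i), c.
rewrite mulr_sumr; apply: eq_bigr => i _.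
by rewrite /qform mulrCA -g_sim mulKVmx.
Qed.

End Image.

Section SimilitudeImage.
Variables (F : fieldType) (v : F -> int) (B g : 'M[F]_2) (mu : F).
Hypotheses (g_unit : g \in unitmx) (mu0 : mu != 0) (g_sim : similitude B g mu).
Local Notation b := (bform B).

Lemma dual_lattice_image L x :
  dual_lattice v B (lattice_image g L) x <->
  lattice_image (mu^-1 *: g) (dual_lattice v B L) x.
Proof.
rewrite /lattice_image invmxZ ?unitmxZ ?unitfE ?invr_eq0 // invrK.
have scaleE y : b ((mu *: invmx g) *m x) y = b x (g *m y).
  by rewrite -{1}[y](mulKmx g_unit) -scalemxAl bformZl -g_sim !mulKVmx.
split=> hx y Ly; last by rewrite -(mulKVmx g_unit y) -scaleE; apply: hx.
by rewrite scaleE; apply: hx; rewrite /lattice_image mulKmx.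
Qed.

Lemma order_of_image L s :
  order_of v B (lattice_image g L) (g *m s *m invmx g) <-> order_of v B L s.
Proof.
have conjZ : g *m s *m invmx g = (mu^-1 *: g) *m s *m invmx (mu^-1 *: g).
  rewrite invmxZ ?unitmxZ ?unitfE ?invr_eq0 // invrK.
  by rewrite -!scalemxAl -scalemxAr scalerA mulVf // scale1r.
have dualE : End_lattice (dual_lattice v B (lattice_image g L)) (g *m s *m invmx g) <->
             End_lattice (dual_lattice v B L) s.
  apply: iff_trans (End_lattice_ext (dual_lattice_image L) _) _.
  rewrite conjZ; apply: End_lattice_image.
  by rewrite unitmxZ ?unitfE ?invr_eq0.
by split=> -[h1 h2]; split; first [exact/(End_lattice_image g_unit) | exact/dualE].
Qed.

Lemma image_order_of L t :
  (exists2 s, order_of v B L s & g *m s *m invmx g = t) <->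
  order_of v B (lattice_image g L) t.
Proof.
have conjK : g *m (invmx g *m t *m g) *m invmx g = t.
  by rewrite !mulmxA mulmxV // mul1mx mulmxK.
split=> [[s hs <-] | ht]; first exact: (proj2 (order_of_image L s)).
by exists (invmx g *m t *m g) => //; apply: (proj1 (order_of_image L _)); rewrite conjK.
Qed.

Lemma maximal_lattice_image I L : maximal_lattice v B I L ->
  maximal_lattice v B (scale_ideal mu I) (lattice_image g L).
Proof.
case=> hl hn hmax; split; first exact: is_lattice_image.
  by move=> a /(norm_lattice_image g_unit g_sim) [a' /hn Ia' ->]; exists a'.
move=> L'' hl'' sub hn'' x L''x.
have gV_unit : invmx g \in unitmx by rewrite unitmx_inv.
apply: (hmax (lattice_image (invmx g) L'') (is_lattice_image gV_unit hl'')).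
- by move=> y Ly; rewrite /lattice_image invmxK; apply: sub; rewrite /lattice_image mulKmx.
- move=> a /(norm_lattice_image gV_unit (similitudeV g_unit mu0 g_sim)).
  by case=> a' /hn'' [a0 Ia0 ->] ->; rewrite mulrA mulVf // mul1r.
by rewrite /lattice_image invmxK mulKVmx.
Qed.

End SimilitudeImage.

Section MatrixAlgebra.
Variables (F : fieldType) (n : nat).
Local Notation M := 'M[F]_n.+1.

Lemma mx_centre (K : M) : (forall s, K *m s = s *m K) -> K = (K 0 0)%:M.
Proof.
move=> hK; apply/matrixP => a i; have /matrixP/(_ a 0) := hK (delta_mx i 0).
rewrite !mxE [X in X = _ -> _](bigD1 i) // [X in _ = X -> _](bigD1 0) //= !mxE !eqxx.
rewrite /= mulr1 !big1 ?addr0 => [->| j /negPf nj | j /negPf nj];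
  by rewrite ?mxE ?nj ?andbT ?andbF ?mul0r ?mulr0 ?mulr_natl.
Qed.

Lemma skolem_noether (phi : M -> M) : injective phi ->
  (forall s t, phi (s + t) = phi s + phi t) ->
  (forall s t, phi (s *m t) = phi s *m phi t) ->
  (forall (c : F) s, phi (c *: s) = c *: phi s) ->
  exists2 g, g \in unitmx & forall s, phi s = g *m s *m invmx g.
Proof.
move=> phi_inj phiD phiM phiZ.
have phi0 : phi 0 = 0 by apply: (addrI (phi 0)); rewrite -phiD !addr0.
pose e0 : 'rV[F]_n.+1 := delta_mx 0 0.
have P00 : phi (delta_mx 0 0) != 0.
  apply/eqP; rewrite -phi0 => /phi_inj/matrixP/(_ 0 0)/eqP.
  by rewrite !mxE eqxx oner_eq0.
have [u Pu] : exists u : 'cV_n.+1, phi (delta_mx 0 0) *m u != 0.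
  apply: NNPP => none; case/eqP: P00; apply: mx_cV_ext => x.
  by rewrite mul0mx; apply/eqP; apply: contra_notT none => Px; exists x.
(* [g x = phi (x e0) u] (see [gE]), so [phi s *m g = g *m s] follows from the
   multiplicativity of [phi]. *)
pose g := \sum_k (phi (delta_mx k 0) *m u) *m delta_mx 0 k.
have col0E (x : 'cV[F]_n.+1) : x *m e0 = \sum_k x k 0 *: delta_mx k 0.
  have {1}-> : x = \sum_k x k 0 *: delta_mx k 0.
    apply: trmx_inj; rewrite [LHS]row_sum_delta linear_sum; apply: eq_bigr => k _.
    by rewrite linearZ /= trmx_delta mxE.
  by rewrite mulmx_suml; apply: eq_bigr => k _; rewrite -scalemxAl mul_delta_mx.
have gE x : g *m x = phi (x *m e0) *m u.
  rewrite col0E (big_morph phi phiD phi0) mulmx_suml mulmx_suml; apply: eq_bigr => k _.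
  by rewrite -mulmxA -rowE (mx11_scalar (row k x)) mxE mul_mx_scalar phiZ -scalemxAl.
have comm s : phi s *m g = g *m s.
  by apply: mx_cV_ext => x; rewrite -!mulmxA !gE mulmxA -phiM mulmxA.
have g_unit : g \in unitmx.
  rewrite unitmxE unitfE -det_tr; apply/det0P => -[r r0 rg].
  have [k rk] : exists k, r 0 k != 0.
    apply: NNPP => none; case/eqP: r0; apply/matrixP => a k; rewrite ord1 mxE.
    by apply/eqP; apply: contra_notT none => ?; exists k.
  have g0 (x : 'cV[F]_n.+1) : g *m x = 0.
    apply: (scalemx_inj rk); rewrite scaler0 scalemxAr.
    have -> : r 0 k *: x = (x *m delta_mx 0 k) *m r^T.
      by rewrite -mulmxA -rowE (mx11_scalar (row k r^T)) !mxE mul_mx_scalar.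
    have gr : g *m r^T = 0 by rewrite -[g]trmxK -trmx_mul rg trmx0.
    by rewrite mulmxA -comm -mulmxA gr mulmx0.
  by case/eqP: Pu; rewrite -(mul_delta_mx (0 : 'I_1) (0 : 'I_n.+1) (0 : 'I_n.+1)) -/e0 -gE g0.
by exists g => // s; rewrite -comm mulmxK.
Qed.

End MatrixAlgebra.

Section Adjoint.
Variables (F : fieldType) (B : 'M[F]_2) (dag : 'M[F]_2 -> 'M[F]_2).
Hypotheses (B_sym : B^T = B) (B_unit : B \in unitmx)
  (hdag : forall s x y, bform B x (s *m y) = bform B (dag s *m x) y).
Local Notation b := (bform B).

Lemma conj_inv_automorphism g mu : g \in unitmx -> similitude B g mu ->
  inv_automorphism dag (fun s => g *m s *m invmx g).
Proof.
move=> g_unit g_sim; split.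
  exists (fun s => invmx g *m s *m g) => s.
    by rewrite !mulmxA mulVmx // mul1mx mulmxKV.
  by rewrite !mulmxA mulmxV // mul1mx mulmxK.
split=> [s t|]; first by rewrite mulmxDr mulmxDl.
split=> [s t|]; first by rewrite -mulmxE !mulmxA mulmxKV.
split; first by rewrite /= mulmx1 mulmxV.
split=> [c s|s]; first by rewrite -scalemxAr -scalemxAl.
apply: (bform_mulmx_inj B_unit) => x y.
rewrite -(mulKVmx g_unit y) -!mulmxA g_sim -hdag -g_sim !mulKVmx //.
by rewrite !mulmxA hdag.
Qed.

Lemma inv_automorphism_similitude phi : inv_automorphism dag phi ->
  exists g mu, [/\ g \in unitmx, mu != 0, similitude B g mu &
                  forall s, phi s = g *m s *m invmx g].
Proof.
case=> phi_bij [phiD [phiM [_ [phiZ phi_dag]]]].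
have [g g_unit phiE] := skolem_noether (bij_inj phi_bij) phiD phiM phiZ.
have [K bK] : exists K, forall x y, b (g *m x) (g *m y) = b x (K *m y).
  by exists (invmx B *m (g^T *m B *m g)) => x y; rewrite /bform trmx_mul !mulmxA mulmxK.
(* [K] is central because [phi] commutes with [dag]. *)
have K_central s : K *m s = s *m K.
  apply: (bform_mulmx_inj B_unit) => y x; rewrite bformC // [RHS]bformC //.
  rewrite -mulmxA -bK (_ : g *m (s *m y) = phi s *m (g *m y)); last first.
    by rewrite phiE !mulmxA mulmxKV.
  by rewrite hdag -phi_dag phiE !mulmxA mulmxKV // -!mulmxA bK -hdag.
have [mu K_mu] : exists mu, K = mu%:M by exists (K 0 0); apply: mx_centre.
exists g, mu; split => // [|x y]; last by rewrite bK K_mu mul_scalar_mx bformZr.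
apply/eqP => mu0; have /matrixP/(_ 0 0)/eqP : delta_mx 0 0 = 0 :> 'cV[F]_2.
  apply: (bform_nondeg B_unit) => y.
  rewrite -(mulKVmx g_unit (delta_mx 0 0)) -(mulKVmx g_unit y) bK K_mu mu0.
  by rewrite mul_scalar_mx scale0r bform0r.
by rewrite !mxE eqxx oner_eq0.
Qed.

End Adjoint.

Section HyperbolicPlane.
Variables (F : fieldType) (v : F -> int) (B : 'M[F]_2) (e f : 'cV[F]_2).
Hypotheses (hv : discrete_valuation v) (B_sym : B^T = B).
Hypotheses (qe : qform B e = 0) (qf : qform B f = 0) (ef : bform B e f = 1).
Local Notation b := (bform B).
Local Notation q := (qform B).

Lemma hyperbolic_decomp x : x = b f x *: e + b e x *: f.
Proof.
pose N : 'M[F]_(1 + 1, 2) := col_mx (f^T *m B) (e^T *m B).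
pose M : 'M[F]_(2, 1 + 1) := row_mx e f.
have NM : N *m M = 1%:M.
  rewrite mul_col_row (mx11_scalar (f^T *m B *m e)) (mx11_scalar (f^T *m B *m f)).
  rewrite (mx11_scalar (e^T *m B *m e)) (mx11_scalar (e^T *m B *m f)).
  rewrite -/(b f e) -/(b f f) -/(b e e) -/(b e f) -/(q f) -/(q e) qe qf bformC // ef.
  by rewrite raddf0 -scalar_mx_block.
rewrite {1}(_ : x = M *m (N *m x)); last by rewrite mulmxA (mulmx1C NM) mul1mx.
rewrite /N mul_col_mx /M mul_row_col -!mulmxA.
rewrite (mx11_scalar (f^T *m (B *m x))) (mx11_scalar (e^T *m (B *m x))) !mul_mx_scalar.
by rewrite /bform !mulmxA.
Qed.

Lemma hyperbolic_bform x y : b x y = b f x * b e y + b e x * b f y.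
Proof.
rewrite {1}(hyperbolic_decomp x) {1}(hyperbolic_decomp y).
rewrite !bformDl !bformDr !bformZl !bformZr -/(q e) -/(q f) qe qf ef.
by rewrite (bformC B_sym f e) ef; ring.
Qed.

Lemma hyperbolic_qform x : q x = 2 * (b f x * b e x).
Proof. by rewrite /qform hyperbolic_bform; ring. Qed.

Lemma hyperbolic_coord_f s t : b f (s *: e + t *: f) = s.
Proof. by rewrite bformDr !bformZr bformC // ef -/(q f) qf; ring. Qed.

Lemma hyperbolic_coord_e s t : b e (s *: e + t *: f) = t.
Proof. by rewrite bformDr !bformZr ef -/(q e) qe; ring. Qed.

Definition hyperbolic_scaling (p : F) : 'M[F]_2 :=
  p *: (e *m (f^T *m B)) + p^-1 *: (f *m (e^T *m B)).

Lemma hyperbolic_scalingE p x :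
  hyperbolic_scaling p *m x = (p * b f x) *: e + (p^-1 * b e x) *: f.
Proof.
rewrite mulmxDl -!scalemxAl -!mulmxA (mx11_scalar (f^T *m (B *m x))).
by rewrite (mx11_scalar (e^T *m (B *m x))) !mul_mx_scalar !scalerA /bform !mulmxA.
Qed.

Section Scaling.
Variable p : F.
Hypothesis p0 : p != 0.

Lemma hyperbolic_scalingK : hyperbolic_scaling p^-1 *m hyperbolic_scaling p = 1%:M.
Proof.
apply: mx_cV_ext => x; rewrite -mulmxA mul1mx !hyperbolic_scalingE.
rewrite hyperbolic_coord_f hyperbolic_coord_e invrK !mulrA mulVf // mulfV // !mul1r.
by rewrite -hyperbolic_decomp.
Qed.

Lemma hyperbolic_scaling_unit : hyperbolic_scaling p \in unitmx.
Proof. by case: (mulmx1_unit hyperbolic_scalingK). Qed.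

Lemma hyperbolic_scaling_isometry : similitude B (hyperbolic_scaling p) 1.
Proof.
move=> x y; rewrite mul1r [in RHS]hyperbolic_bform hyperbolic_bform !hyperbolic_scalingE.
by rewrite !hyperbolic_coord_f !hyperbolic_coord_e; field.
Qed.

End Scaling.

Variable m : int.
Hypothesis two_neq0 : (2 : F) != 0.

Definition hyperbolic_lattice (i : int) : 'cV[F]_2 -> Prop :=
  fun x => vsmall v i (b f x) /\ vsmall v (m - i) (2 * b e x).

Lemma is_lattice_hyperbolic i : is_lattice v (hyperbolic_lattice i).
Proof.
have [p [p0 vp]] := dv_surj hv i; have [p' [p'0 vp']] := dv_surj hv (m - i).
pose gen (k : 'I_2) := if k == 0 then p *: e else (p' / 2) *: f.
have sum_gen (c : 'I_2 -> F) :
    \sum_k c k *: gen k = (c 0 * p) *: e + (c 1 * p' / 2) *: f.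
  rewrite big_ord_recl big_ord1 (_ : lift ord0 ord0 = 1 :> 'I_2); last exact: val_inj.
  by rewrite /gen /= !scalerA mulrA.
have int_iff k y c : c != 0 -> v c = k -> vsmall v 0 (y / c) <-> vsmall v k y.
  by move=> c0 <-; rewrite mulrC vsmall_mull ?invr_eq0 // (dvV hv c0) sub0r opprK.
pose coef x (k : 'I_2) := if k == 0 then b f x / p else 2 * b e x / p'.
have decomp x : x = \sum_k coef x k *: gen k.
  by rewrite sum_gen /coef /= !mulfVK // [2 * _]mulrC mulfK // -hyperbolic_decomp.
exists 2%N, gen; split=> [x | w]; last by exists (coef w); apply: decomp.
split=> [[hf he] | [c [hc ->]]].
  exists (coef x); split=> [k|]; last exact: decomp.
  by rewrite /coef; case: ifP => _; [apply/(int_iff _ _ _ p0 vp) | apply/(int_iff _ _ _ p'0 vp')].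
rewrite sum_gen /hyperbolic_lattice hyperbolic_coord_f hyperbolic_coord_e.
rewrite [2 * _]mulrC mulfVK //; split.
  by have := vsmallM hv (hc 0) (vsmall_val v p); rewrite vp add0r.
by have := vsmallM hv (hc 1) (vsmall_val v p'); rewrite vp' add0r.
Qed.

Lemma hyperbolic_lattice_image p i x : p != 0 ->
  hyperbolic_lattice (i + v p) x <->
  lattice_image (hyperbolic_scaling p) (hyperbolic_lattice i) x.
Proof.
move=> p0; rewrite /lattice_image; have pV0 : p^-1 != 0 by rewrite invr_eq0.
have -> : invmx (hyperbolic_scaling p) = hyperbolic_scaling p^-1.
  have := hyperbolic_scalingK pV0; rewrite invrK => pK.
  by rewrite -[RHS](mulKmx (hyperbolic_scaling_unit p0)) pK mulmx1.
rewrite /hyperbolic_lattice hyperbolic_scalingE.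
rewrite hyperbolic_coord_f hyperbolic_coord_e invrK mulrCA !vsmall_mull // (dvV hv p0).
by rewrite opprK opprD addrA.
Qed.

Lemma norm_hyperbolic_lattice i a :
  norm_lattice v B (hyperbolic_lattice i) a -> vsmall v m a.
Proof.
apply: (norm_lattice_vsmall hv) => y [hf he]; rewrite hyperbolic_qform mulrCA.
by have := vsmallM hv hf he; rewrite addrC subrK.
Qed.

Lemma lattice_min_coord L : is_lattice v L ->
  exists x0, [/\ L x0, b f x0 != 0 & forall x, L x -> vsmall v (v (b f x0)) (b f x)].
Proof.
case=> n [g [hL g_span]]; have [c ec] := g_span e.
have [k1 gk1 | g0] := pickP (fun k => b f (g k) != 0); last first.
  have /eqP := oner_neq0 F; rewrite -ef bformC // ec bform_sumr big1 // => k _.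
  by move/negbFE/eqP: (g0 k) ->; rewrite mulr0.
have [k0 [gk0 hmin]] := exists_min_val v (w := fun k => b f (g k)) gk1.
have Lg x : L x -> vsmall v (v (b f (g k0))) (b f x).
  case/hL => d [hd ->]; rewrite bform_sumr; apply: (vsmall_sum hv) => k.
  by have := vsmallM hv (hd k) (hmin k); rewrite add0r.
exists (g k0); split => //; apply/hL; exists (fun k => (k == k0)%:R); split.
  by move=> k; case: (k == k0); [right; rewrite (dv1 hv) | left].
rewrite (bigD1 k0) //= eqxx scale1r big1 ?addr0 // => k /negPf ->.
by rewrite scale0r.
Qed.

Lemma hyperbolic_lattice_bound L : is_lattice v L ->
  (forall a, norm_lattice v B L a -> vsmall v m a) ->
  exists i, forall x, L x -> hyperbolic_lattice i x.
Proof.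
move=> hl hn; have [x0 [Lx0 s0 hmin]] := lattice_min_coord hl.
set s := b f x0 in s0 hmin; exists (v s) => x Lx; split; first exact: hmin.
have q0 : vsmall v m (2 * s * b e x0).
  by rewrite -mulrA -hyperbolic_qform; apply/hn/(norm_lattice_qform B hv).
have t1 : vsmall v m (2 * s * b e x0 * (b f x / s)).
  have := vsmallM hv q0 (vsmallM hv (hmin _ Lx) (vsmallV hv s0)).
  by rewrite addrN addr0.
have : vsmall v m (s * (2 * b e x)).
  have -> : s * (2 * b e x) = 2 * b x0 x - 2 * s * b e x0 * (b f x / s).
    by rewrite (hyperbolic_bform x0 x) -/s; field.
  exact: (vsmallB hv (norm_lattice_bform2 hv B_sym hl hn Lx0 Lx) t1).
by rewrite vsmall_mull.
Qed.

Lemma maximal_hyperbolic_lattice I L : (forall x, I x <-> vsmall v m x) ->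
  maximal_lattice v B I L -> exists i, forall x, L x <-> hyperbolic_lattice i x.
Proof.
move=> hI [hl hn hmax].
have [i hi] : exists i, forall x, L x -> hyperbolic_lattice i x.
  by apply: hyperbolic_lattice_bound => // a /hn /hI.
exists i => x; split; first exact: hi.
apply: hmax; [exact: is_lattice_hyperbolic | exact: hi |].
by move=> a /norm_hyperbolic_lattice /hI.
Qed.

Lemma maximal_hyperbolic_lattices_isometric I L L' :
  (forall x, I x <-> vsmall v m x) -> maximal_lattice v B I L -> maximal_lattice v B I L' ->
  exists g, [/\ g \in unitmx, similitude B g 1 & forall x, L' x <-> lattice_image g L x].
Proof.
move=> hI hL hL'.
have [i Li] := maximal_hyperbolic_lattice hI hL.
have [j L'j] := maximal_hyperbolic_lattice hI hL'.
have [p [p0 vp]] := dv_surj hv (j - i).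
exists (hyperbolic_scaling p); split.
- exact: hyperbolic_scaling_unit.
- exact: hyperbolic_scaling_isometry.
move=> x; rewrite L'j (_ : j = i + v p); last by rewrite vp addrC subrK.
by rewrite hyperbolic_lattice_image // /lattice_image Li.
Qed.

End HyperbolicPlane.

Lemma isotropic_hyperbolic_pair (F : fieldType) (B : 'M[F]_2) (e : 'cV[F]_2) :
  B^T = B -> B \in unitmx -> (2 : F) != 0 -> e != 0 -> qform B e = 0 ->
  exists f, bform B e f = 1 /\ qform B f = 0.
Proof.
move=> B_sym B_unit two_neq0 e0 qe.
have [y ey] : exists y, bform B e y != 0.
  apply: NNPP => none; case/eqP: e0; apply: (bform_nondeg B_unit) => y.
  by apply/eqP; apply: contra_notT none => ?; exists y.
have [y' ey'] : exists y', bform B e y' = 1.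
  by exists ((bform B e y)^-1 *: y); rewrite bformZr mulVf.
exists (y' - (qform B y' / 2) *: e); split.
  by rewrite bformBr bformZr -/(qform B e) qe mulr0 subr0.
rewrite /qform bformBl !bformBr !bformZl !bformZr -/(qform B e) qe (bformC B_sym y' e) ey'.
by rewrite -/(qform B y'); field.
Qed.

Section AnisotropicPlane.
Variables (F : fieldType) (v : F -> int) (B : 'M[F]_2).
Hypotheses (hv : discrete_valuation v) (hcomp : vcomplete v) (B_sym : B^T = B).
Hypothesis anisotropic : forall z, qform B z = 0 -> z = 0.
Local Notation b := (bform B).
Local Notation q := (qform B).

Lemma anisotropic_qformD m x y :
  vsmall v m (q x) -> vsmall v m (q y) -> vsmall v m (q (x + y)).
Proof.
(* If [q (x + y)] were not in [p^m], Hensel would give an integral root [l] of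
   [q (x + y - l x) = 0], contradicting anisotropy. *)
move=> hx hy; have [//|/not_vsmall [u0 lt_um]] := vsmall_dec v m (q (x + y)).
exfalso; set z := x + y in u0 lt_um; set u := q z in u0 lt_um.
have m_u : 1 <= m - v u by move: lt_um; move: (v u) => w; lia.
have small_div w : vsmall v m w -> vsmall v 1 (w / u).
  by move=> hw; apply: (vsmallW m_u); have := vsmallM hv hw (vsmallV hv u0).
have qy : q y = u - 2 * b z x + q x.
  have -> : y = z - x by rewrite /z addrAC subrr add0r.
  by rewrite /u /qform !bformBl !bformBr (bformC B_sym x z); ring.
have [l l_int hl] : exists2 l, vsmall v 0 l & (2 * b z x / u) * l = 1 + (q x / u) * l * l.
  apply: (hensel_quadratic hv hcomp (small_div _ hx)).
  have -> : 2 * b z x / u - 1 = q x / u - q y / u by rewrite qy; field.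
  exact: (vsmallB hv (small_div _ hx) (small_div _ hy)).
have eu : u = 2 * b z x * l - q x * l * l.
  transitivity (u * (2 * b z x / u * l - q x / u * l * l)); last by field.
  by rewrite hl addrK mulr1.
have zl : z = l *: x.
  apply/eqP; rewrite -subr_eq0; apply/eqP/anisotropic.
  rewrite /qform bformBl !bformBr !bformZl !bformZr -/(q z) -/u -/(q x) (bformC B_sym x z) eu.
  by ring.
have : vsmall v m u.
  by rewrite /u zl qformZ; have := vsmallM hv (vsmallM hv l_int l_int) hx; rewrite !add0r.
by case=> [/eqP|]; [rewrite (negPf u0) | rewrite leNgt lt_um].
Qed.

Lemma anisotropic_maximal_unique I m L L' : (forall x, I x <-> vsmall v m x) ->
  maximal_lattice v B I L -> maximal_lattice v B I L' -> forall x, L' x <-> L x.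
Proof.
move=> hI [hl hn hmax] [hl' hn' hmax'].
have small_q L0 y : (forall a, norm_lattice v B L0 a -> I a) -> L0 y -> vsmall v m (q y).
  by move=> hn0 Ly; apply/hI/hn0/(norm_lattice_qform B hv).
have hK : is_lattice v (lattice_sum L L') by apply: is_lattice_sum.
have nK a : norm_lattice v B (lattice_sum L L') a -> I a.
  move=> na; apply/hI; apply: (norm_lattice_vsmall hv _ na) => _ [y [z [Ly L'z ->]]].
  by apply: anisotropic_qformD; [apply: (small_q L) | apply: (small_q L')].
have [L0 L'0] := (lattice0 hl, lattice0 hl').
have KL : forall x, lattice_sum L L' x -> L x.
  by apply: hmax => // x Lx; exists x, 0; rewrite addr0.
have KL' : forall x, lattice_sum L L' x -> L' x.
  by apply: hmax' => // x L'x; exists 0, x; rewrite add0r.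
by move=> x; split=> hx; [apply: KL; exists 0, x | apply: KL'; exists x, 0];
  rewrite ?add0r ?addr0.
Qed.

End AnisotropicPlane.

Lemma maximal_lattices_isometric (F : fieldType) (v : F -> int) (B : 'M[F]_2)
  (I : F -> Prop) (L L' : 'cV[F]_2 -> Prop) :
  nonarch_local_field v -> (2 : F) != 0 -> B^T = B -> B \in unitmx ->
  fractional_ideal v I -> maximal_lattice v B I L -> maximal_lattice v B I L' ->
  exists g, [/\ g \in unitmx, similitude B g 1 & forall x, L' x <-> lattice_image g L x].
Proof.
case=> hv hcomp _ two_neq0 B_sym B_unit hI hL hL'.
have [m hm] := fractional_idealP hv hI.
have [[e [e0 qe]] | aniso] := classic (exists e, e != 0 /\ qform B e = 0).
  have [f [ef qf]] := isotropic_hyperbolic_pair B_sym B_unit two_neq0 e0 qe.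
  exact: (maximal_hyperbolic_lattices_isometric hv B_sym qe qf ef two_neq0 hm hL hL').
exists 1%:M; split=> [||x]; rewrite ?unitmx1 //; first by move=> x y; rewrite !mul1mx mul1r.
rewrite /lattice_image invmx1 mul1mx.
apply: (anisotropic_maximal_unique hv hcomp B_sym _ hm hL hL').
by move=> z qz; apply/eqP; apply: contra_notT aniso => z0; exists z.
Qed.

Theorem lemma5p4 (F : fieldType) (v : F -> int)
  (hF : nonarch_local_field v) (hchar : (2%:R : F) != 0)
  (B : 'M[F]_2) (hBsym : B^T = B) (hBnd : B \in unitmx)
  (dag : 'M[F]_2 -> 'M[F]_2)
  (hdag : forall (s : 'M[F]_2) (x y : 'cV[F]_2),
            bform B x (s *m y) = bform B (dag s *m x) y) :
  (forall (phi : 'M[F]_2 -> 'M[F]_2) (I : F -> Prop) (L : 'cV[F]_2 -> Prop),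
     inv_automorphism dag phi -> fractional_ideal v I -> maximal_lattice v B I L ->
     exists (l : F) (L' : 'cV[F]_2 -> Prop),
       l != 0 /\ maximal_lattice v B (scale_ideal l I) L' /\
       forall t, (exists2 s, order_of v B L s & phi s = t) <-> order_of v B L' t)
  /\
  (forall (I : F -> Prop) (L L' : 'cV[F]_2 -> Prop),
     fractional_ideal v I -> maximal_lattice v B I L -> maximal_lattice v B I L' ->
     exists phi : 'M[F]_2 -> 'M[F]_2,
       inv_automorphism dag phi /\
       forall t, (exists2 s, order_of v B L s & phi s = t) <-> order_of v B L' t).
Proof.
split=> [phi I L hphi _ hL | I L L' hI hL hL'].
  have [g [mu [g_unit mu0 g_sim phiE]]] := inv_automorphism_similitude hBsym hBnd hdag hphi.
  exists mu, (lattice_image g L); split=> //; split; first exact: maximal_lattice_image.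
  move=> t; rewrite -(image_order_of v g_unit mu0 g_sim).
  by split=> -[s hs <-]; exists s; rewrite ?phiE.
have [g [g_unit g_iso L'E]] := maximal_lattices_isometric hF hchar hBsym hBnd hI hL hL'.
exists (fun s => g *m s *m invmx g).
split; first exact: (conj_inv_automorphism hBnd hdag g_unit g_iso).
move=> t; rewrite (image_order_of v g_unit (oner_neq0 F) g_iso).
by apply: order_of_ext => x; apply: iff_sym.
Qed.
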